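(* Let $M,N,d_f,d_t$ be positive integers with $d_f\mid M$ and $d_t\mid N$, with $N/(2d_t)$ an integer, and let $T>0$, $\Delta f>0$. Consider a doubly selective channel with $P$ paths having complex gains $h_1,\dots,h_P$, delays $\tau_1,\dots,\tau_P\ge 0$ and Dopplers $\nu_1,\dots,\nu_P\in\mathbb{R}$, and set $l_i=M\Delta f\,\tau_i$, $k_i=NT\,\nu_i$. Define, for all integers $k,l$, the original CSF $$h_{\rm DD}[k,l]=\sum_{i=1}^P h_i\sum_{m=0}^{M-1}\frac{1}{\sqrt M}e^{-j2\pi m\frac{l_i-l}{M}}\sum_{n=0}^{N-1}\frac{1}{\sqrt N}e^{j2\pi n\frac{k_i-k}{N}},$$ and the periodic CSF obtained from pilots on the lattice $m\in\{0,d_f,2d_f,\dots\}$, $n\in\{0,d_t,2d_t,\dots\}$, $$h^{\rm Periodic}_{\rm DD}[k,l]=\sum_{i=1}^P h_i\sum_{m'=0}^{M/d_f-1}\frac{1}{\sqrt{\tilde M}}e^{-j2\pi m' d_f\frac{l_i-l}{M}}\sum_{n'=0}^{N/d_t-1}\frac{1}{\sqrt{\tilde N}}e^{j2\pi n' d_t\frac{k_i-k}{N}},$$ with $\tilde M=M/d_f^2$ and $\tilde N=N/d_t^2$. Suppose (i) every delay and Doppler is on-grid, i.e. $l_i\in\mathbb{Z}$ and $k_i\in\mathbb{Z}$ (resolutions $\frac{1}{M\Delta f}$ and $\frac{1}{NT}$), and (ii) $\nu_i\in\left[-\frac{1}{2d_tT},\frac{1}{2d_tT}-\frac{1}{NT}\right]$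 and $\tau_i\in\left[0,\frac{1}{d_f\Delta f}-\frac{1}{M\Delta f}\right]$ for all $i$. Then for all $k\in\{-\frac{N}{2d_t},-\frac{N}{2d_t}+1,\dots,\frac{N}{2d_t}-1\}$ and all $l\in\{0,1,\dots,\frac{M}{d_f}-1\}$, $h^{\rm Periodic}_{\rm DD}[k,l]=h_{\rm DD}[k,l]$, i.e. one period of the periodic CSF exactly represents the original CSF.
   Context: Setting: OFDM with $N$ symbols of duration $T$ and $M$ subcarriers of spacing $\Delta f$; the sampled channel transfer function is $h_{\rm TF}[m,n]=\sum_{i=1}^P h_i e^{j2\pi\nu_i nT}e^{-j2\pi\tau_i m\Delta f}$, and the CSF $h_{\rm DD}$ is its DFT along time ($n$) and inverse DFT along frequency ($m$), as written explicitly in the claim. The periodic CSF is the same transform applied to the CTF sampled only at pilot positions $m\in\{0,d_f,\dots,M-d_f\}$, $n\in\{0,d_t,\dots,N-d_t\}$ (zero elsewhere), with scaling factors $\tilde M,\tilde N$ as given; it is periodic with periods $N/d_t$ in $k$ and $M/d_f$ in $l$. Here $j=\sqrt{-1}$. *)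

From Stdlib Require Import Reals Lra Lia ZArith Arith.
From Coquelicot Require Export Coquelicot.
Open Scope R_scope.

Definition cis (theta : R) : C := (cos theta, sin theta).

Fixpoint csum (n : nat) (f : nat -> C) : C :=
  match n with
  | O => RtoC 0
  | S n' => Cplus (csum n' f) (f n')
  end.

Definition lidx (M : nat) (Df : R) (tau : R) : R := INR M * Df * tau.
Definition kidx (N : nat) (T : R) (nu : R) : R := INR N * T * nu.

Definition hDD (M N P : nat) (T Df : R) (h : nat -> C) (tau nu : nat -> R)
  (k l : Z) : C :=
  csum P (fun i =>
    Cmult (h i)
     (Cmult
       (csum M (fun m =>
          Cmult (RtoC (/ sqrt (INR M)))
            (cis (- (2 * PI * INR m * (lidx M Df (tau i) - IZR l) / INR M)))))
       (csum N (fun n =>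
          Cmult (RtoC (/ sqrt (INR N)))
            (cis (2 * PI * INR n * (kidx N T (nu i) - IZR k) / INR N)))))).

Definition hDD_periodic (M N df dt P : nat) (T Df : R) (h : nat -> C)
  (tau nu : nat -> R) (k l : Z) : C :=
  csum P (fun i =>
    Cmult (h i)
     (Cmult
       (csum (M / df) (fun m' =>
          Cmult (RtoC (/ sqrt (INR M / (INR df ^ 2))))
            (cis (- (2 * PI * INR m' * INR df * (lidx M Df (tau i) - IZR l) / INR M)))))
       (csum (N / dt) (fun n' =>
          Cmult (RtoC (/ sqrt (INR N / (INR dt ^ 2))))
            (cis (2 * PI * INR n' * INR dt * (kidx N T (nu i) - IZR k) / INR N)))))).

From Stdlib Require Import Reals ZArith Arith Lra Lia.
From Coquelicot Require Import Coquelicot.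
Open Scope R_scope.

(* With on-grid delays and Dopplers every one-dimensional factor of either CSF
   is a normalized sum of roots of unity.  The full sum over n points with
   integer offset a equals sqrt n when a = 0 (mod n) and 0 otherwise; the sum
   decimated by d equals sqrt n when a = 0 (mod n/d) and 0 otherwise, the
   normalization sqrt(n/d^2) compensating for the n/d retained terms.  The range
   conditions force |a| < n/d, where both congruences just say a = 0. *)

Lemma csum_ext n f g : (forall m, (m < n)%nat -> f m = g m) -> csum n f = csum n g.
Proof.
  induction n as [|n IH]; intros Hfg; simpl; [reflexivity|].
  rewrite IH by (intros; apply Hfg; lia); rewrite Hfg by lia; reflexivity.
Qed.

Lemma csum_mull n c f : csum n (fun m => Cmult c (f m)) = Cmult c (csum n f).
Proof.
  induction n as [|n IH]; simpl.
  - apply injective_projections; simpl; ring.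
  - rewrite IH; ring.
Qed.

Lemma csum_const n c : csum n (fun _ => c) = Cmult (RtoC (INR n)) c.
Proof.
  induction n as [|n IH]; simpl csum.
  - apply injective_projections; simpl; ring.
  - rewrite IH, S_INR; apply injective_projections; simpl; ring.
Qed.

Lemma cis_0 : cis 0 = RtoC 1.
Proof. unfold cis; rewrite cos_0, sin_0; reflexivity. Qed.

Lemma cis_add a b : Cmult (cis a) (cis b) = cis (a + b).
Proof. unfold cis, Cmult; simpl; rewrite cos_plus, sin_plus; f_equal; ring. Qed.

Lemma cis_double_eq_1 th : cis (2 * th) = RtoC 1 <-> sin th = 0.
Proof.
  unfold cis, RtoC; rewrite cos_2a_sin, sin_2a; split.
  - intros E; injection E as Ecos _; nra.
  - intros ->; f_equal; ring.
Qed.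

Lemma cis_2PI_IZR (k : Z) : cis (2 * PI * IZR k) = RtoC 1.
Proof.
  rewrite Rmult_assoc; apply cis_double_eq_1, sin_eq_0_1.
  exists k; ring.
Qed.

Lemma cis_root_of_unity_neq_1 (n : nat) (a : Z) :
  (- Z.of_nat n < a < Z.of_nat n)%Z -> a <> 0%Z ->
  cis (2 * PI * IZR a / INR n) <> RtoC 1.
Proof.
  intros Ha Ha0 E.
  assert (HnR : 0 < INR n) by (apply lt_0_INR; lia).
  replace (2 * PI * IZR a / INR n) with (2 * (PI * IZR a / INR n)) in E
    by (unfold Rdiv; ring).
  apply cis_double_eq_1, sin_eq_0_0 in E as [k Hk].
  assert (Hak : IZR a = IZR (k * Z.of_nat n)).
  { rewrite mult_IZR, <- INR_IZR_INZ.
    pose proof PI_neq0 as HPI.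
    transitivity (PI * IZR a / INR n * INR n / PI); [field; split; [lra | exact HPI]|].
    rewrite Hk; field; exact HPI. }
  apply eq_IZR in Hak.
  destruct (Z.lt_trichotomy k 0) as [Hk0 | [-> | Hk0]]; nia.
Qed.

Lemma csum_cis_geometric n th :
  cis th <> RtoC 1 -> cis (INR n * th) = RtoC 1 ->
  csum n (fun m => cis (INR m * th)) = RtoC 0.
Proof.
  intros Hth Hn.
  assert (Htel : forall p, Cmult (csum p (fun m => cis (INR m * th))) (Cminus (cis th) (RtoC 1))
                           = Cminus (cis (INR p * th)) (RtoC 1)).
  { induction p as [|p IH]; simpl csum.
    - rewrite Rmult_0_l, cis_0; apply injective_projections; simpl; ring.
    - rewrite S_INR, Rmult_plus_distr_r, Rmult_1_l, <- cis_add.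
      transitivity (Cplus (Cmult (csum p (fun m => cis (INR m * th))) (Cminus (cis th) (RtoC 1)))
                          (Cmult (cis (INR p * th)) (Cminus (cis th) (RtoC 1)))); [ring|].
      rewrite IH; ring. }
  assert (Hne : Cminus (cis th) (RtoC 1) <> RtoC 0).
  { intros E; apply Hth.
    replace (cis th) with (Cplus (Cminus (cis th) (RtoC 1)) (RtoC 1)) by ring.
    rewrite E; ring. }
  specialize (Htel n); rewrite Hn in Htel.
  set (S := csum n _) in *.
  replace S with (Cmult (Cmult S (Cminus (cis th) (RtoC 1))) (Cinv (Cminus (cis th) (RtoC 1))))
    by (field; exact Hne).
  rewrite Htel; ring.
Qed.

Lemma csum_roots_of_unity (n : nat) (a : Z) :
  (- Z.of_nat n < a < Z.of_nat n)%Z ->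
  csum n (fun m => cis (2 * PI * INR m * IZR a / INR n)) =
  if (a =? 0)%Z then RtoC (INR n) else RtoC 0.
Proof.
  intros Ha.
  assert (HnR : INR n <> 0) by (apply not_0_INR; lia).
  destruct (Z.eqb_spec a 0) as [->|Ha0].
  - rewrite (csum_ext n _ (fun _ => RtoC 1)), csum_const.
    + apply injective_projections; simpl; ring.
    + intros m _; replace (2 * PI * INR m * IZR 0 / INR n) with 0
        by (simpl; field; exact HnR); apply cis_0.
  - set (th := 2 * PI * IZR a / INR n).
    rewrite (csum_ext n _ (fun m => cis (INR m * th)))
      by (intros m _; unfold th; f_equal; field; exact HnR).
    apply csum_cis_geometric; [now apply cis_root_of_unity_neq_1|].
    replace (INR n * th) with (2 * PI * IZR a) by (unfold th; field; exact HnR).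
    apply cis_2PI_IZR.
Qed.

Lemma csum_decimated (K d : nat) (a : Z) :
  (0 < d)%nat -> (- Z.of_nat K < a < Z.of_nat K)%Z ->
  csum (K * d / d) (fun m => Cmult (RtoC (/ sqrt (INR (K * d) / INR d ^ 2)))
      (cis (2 * PI * INR m * INR d * IZR a / INR (K * d)))) =
  csum (K * d) (fun m => Cmult (RtoC (/ sqrt (INR (K * d))))
      (cis (2 * PI * INR m * IZR a / INR (K * d)))).
Proof.
  intros Hd Ha.
  assert (HKR : 0 < INR K) by (apply lt_0_INR; lia).
  assert (HdR : 0 < INR d) by (apply lt_0_INR; lia).
  rewrite Nat.div_mul by lia; rewrite !csum_mull.
  rewrite (csum_ext K _ (fun m => cis (2 * PI * INR m * IZR a / INR K)))
    by (intros m _; rewrite mult_INR; f_equal; field; lra).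
  rewrite !csum_roots_of_unity by (rewrite ?Nat2Z.inj_mul; nia).
  destruct (a =? 0)%Z; [|apply injective_projections; simpl; ring].
  rewrite sqrt_div_alt, sqrt_pow2 by (try apply pow_lt; lra).
  rewrite mult_INR.
  assert (Hs : sqrt (INR K * INR d) * sqrt (INR K * INR d) = INR K * INR d)
    by (apply sqrt_sqrt; nra).
  assert (Hs0 : 0 < sqrt (INR K * INR d)) by (apply sqrt_lt_R0; nra).
  apply injective_projections; simpl; [|ring].
  field_simplify; [nra | lra | lra].
Qed.

Lemma csum_decimated_conj (K d : nat) (x y : Z) :
  (0 < d)%nat -> (- Z.of_nat K < y - x < Z.of_nat K)%Z ->
  csum (K * d / d) (fun m => Cmult (RtoC (/ sqrt (INR (K * d) / INR d ^ 2)))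
      (cis (- (2 * PI * INR m * INR d * (IZR x - IZR y) / INR (K * d))))) =
  csum (K * d) (fun m => Cmult (RtoC (/ sqrt (INR (K * d))))
      (cis (- (2 * PI * INR m * (IZR x - IZR y) / INR (K * d))))).
Proof.
  intros Hd Hxy.
  rewrite (csum_ext (K * d / d) _ (fun m => Cmult (RtoC (/ sqrt (INR (K * d) / INR d ^ 2)))
      (cis (2 * PI * INR m * INR d * IZR (y - x) / INR (K * d))))).
  rewrite (csum_ext (K * d) _ (fun m => Cmult (RtoC (/ sqrt (INR (K * d))))
      (cis (2 * PI * INR m * IZR (y - x) / INR (K * d))))).
  - now apply csum_decimated.
  - intros m _; rewrite minus_IZR; unfold Rdiv; do 3 f_equal; ring.
  - intros m _; rewrite minus_IZR; unfold Rdiv; do 3 f_equal; ring.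
Qed.

Lemma lidx_on_grid_range (K df : nat) (Df tau : R) (z : Z) :
  (0 < K)%nat -> (0 < df)%nat -> 0 < Df ->
  0 <= tau <= 1 / (INR df * Df) - 1 / (INR (K * df) * Df) ->
  lidx (K * df) Df tau = IZR z -> (0 <= z < Z.of_nat K)%Z.
Proof.
  intros HK Hdf HDf [Hlo Hhi] Hz.
  assert (HKR : 0 < INR K) by (apply lt_0_INR; lia).
  assert (HdfR : 0 < INR df) by (apply lt_0_INR; lia).
  assert (Hscale : 0 < INR K * INR df * Df) by (apply Rmult_lt_0_compat; nra).
  unfold lidx in Hz; rewrite mult_INR in Hz, Hhi.
  split.
  - apply le_IZR; rewrite <- Hz; apply Rmult_le_pos; lra.
  - apply lt_IZR; rewrite <- INR_IZR_INZ, <- Hz.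
    apply Rle_lt_trans with (INR K - 1); [|lra].
    replace (INR K - 1) with
      (INR K * INR df * Df * (1 / (INR df * Df) - 1 / (INR K * INR df * Df)))
      by (field; lra).
    apply Rmult_le_compat_l; lra.
Qed.

Lemma kidx_on_grid_range (K dt : nat) (T nu : R) (z : Z) :
  (0 < K)%nat -> (0 < dt)%nat -> 0 < T ->
  - (1 / (2 * INR dt * T)) <= nu <= 1 / (2 * INR dt * T) - 1 / (INR (2 * K * dt) * T) ->
  kidx (2 * K * dt) T nu = IZR z -> (- Z.of_nat K <= z < Z.of_nat K)%Z.
Proof.
  intros HK Hdt HT [Hlo Hhi] Hz.
  assert (HKR : 0 < INR K) by (apply lt_0_INR; lia).
  assert (HdtR : 0 < INR dt) by (apply lt_0_INR; lia).
  assert (Hscale : 0 < 2 * INR K * INR dt * T) by (apply Rmult_lt_0_compat; nra).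
  unfold kidx in Hz; rewrite !mult_INR in Hz, Hhi; simpl INR in Hz, Hhi.
  split.
  - apply le_IZR; rewrite opp_IZR, <- INR_IZR_INZ, <- Hz.
    replace (- INR K) with (2 * INR K * INR dt * T * - (1 / (2 * INR dt * T)))
      by (field; lra).
    apply Rmult_le_compat_l; lra.
  - apply lt_IZR; rewrite <- INR_IZR_INZ, <- Hz.
    apply Rle_lt_trans with (INR K - 1); [|lra].
    replace (INR K - 1) with
      (2 * INR K * INR dt * T * (1 / (2 * INR dt * T) - 1 / ((1 + 1) * INR K * INR dt * T)))
      by (field; lra).
    apply Rmult_le_compat_l; lra.
Qed.

Theorem theorem1 (M N df dt P : nat) (T Df : R) (h : nat -> C) (tau nu : nat -> R) :
  (0 < M)%nat -> (0 < N)%nat -> (0 < df)%nat -> (0 < dt)%nat ->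
  Nat.divide df M -> Nat.divide dt N -> Nat.divide (2 * dt) N ->
  0 < T -> 0 < Df ->
  (forall i, (i < P)%nat -> 0 <= tau i) ->
  (* (i) on-grid delays and Dopplers *)
  (forall i, (i < P)%nat -> exists z : Z, lidx M Df (tau i) = IZR z) ->
  (forall i, (i < P)%nat -> exists z : Z, kidx N T (nu i) = IZR z) ->
  (* (ii) range conditions *)
  (forall i, (i < P)%nat ->
     - (1 / (2 * INR dt * T)) <= nu i <= 1 / (2 * INR dt * T) - 1 / (INR N * T)) ->
  (forall i, (i < P)%nat ->
     0 <= tau i <= 1 / (INR df * Df) - 1 / (INR M * Df)) ->
  forall (k l : Z),
    (- Z.of_nat (N / (2 * dt)) <= k < Z.of_nat (N / (2 * dt)))%Z ->
    (0 <= l < Z.of_nat (M / df))%Z ->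
    hDD_periodic M N df dt P T Df h tau nu k l = hDD M N P T Df h tau nu k l.
Proof.
  intros HM HN Hdf Hdt [Mf ->] _ [Nt HNt] HT HDf _ Hl Hk Hnu Htau k l Hkr Hlr.
  rewrite HNt, Nat.div_mul in Hkr by lia.
  rewrite Nat.div_mul in Hlr by lia.
  replace (Nt * (2 * dt))%nat with (2 * Nt * dt)%nat in HNt by lia; subst N.
  unfold hDD_periodic, hDD; apply csum_ext; intros i Hi.
  destruct (Hl i Hi) as [zl Hzl], (Hk i Hi) as [zk Hzk].
  pose proof (lidx_on_grid_range Mf df Df (tau i) zl ltac:(lia) Hdf HDf (Htau i Hi) Hzl).
  pose proof (kidx_on_grid_range Nt dt T (nu i) zk ltac:(lia) Hdt HT (Hnu i Hi) Hzk).
  rewrite Hzl, Hzk; do 2 f_equal.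
  - apply csum_decimated_conj; lia.
  - rewrite <- minus_IZR; apply csum_decimated; lia.
Qed.
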